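(* Let $X$ be a real Banach space with the fixed point property, and let $f:X\to X$ be nonexpansive and real analytic. If $f$ has more than one fixed point, then the set of fixed points of $f$ is unbounded.
   Context: $X$ has the fixed point property if for every nonempty closed, bounded, convex $C\subset X$ and every nonexpansive $g:C\to C$, $g$ has a fixed point in $C$. Nonexpansive: $\|f(x)-f(y)\|\le\|x-y\|$. Real analytic (weak sense): for all $x,y\in X$ and $z^*\in X^*$, the function $t\mapsto z^*(f(x+ty))$ is real analytic on $\mathbb{R}$. *)

From HB Require Import structures.
From mathcomp Require Import all_boot all_order all_algebra.
From mathcomp Require Import all_classical all_reals all_analysis.
Set Implicit Arguments. Unset Strict Implicit. Unset Printing Implicit Defensive.
Import Order.TTheory GRing.Theory Num.Theory.
Import numFieldNormedType.Exports.
Local Open Scope classical_set_scope.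
Local Open Scope ring_scope.

Section Defs.
Context {R : realType} {X : normedModType R}.

Definition convex_subset (C : set X) : Prop :=
  forall x y, C x -> C y -> forall t : R, 0 <= t -> t <= 1 ->
    C (t *: x + (1 - t) *: y).

Definition bounded_subset (C : set X) : Prop :=
  exists M : R, forall x, C x -> `|x| <= M.

Definition nonexpansive_on (C : set X) (g : X -> X) : Prop :=
  forall x y, C x -> C y -> `|g x - g y| <= `|x - y|.

(* A map C -> C is
   represented by g : X -> X with g @` C `<=` C (values outside C irrelevant). *)
Definition fixed_point_property : Prop :=
  forall (C : set X) (g : X -> X),
    C !=set0 -> closed C -> bounded_subset C -> convex_subset C ->
    g @` C `<=` C -> nonexpansive_on C g ->
    exists2 x, C x & g x = x.

Definition nonexpansive (f : X -> X) : Prop :=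
  forall x y, `|f x - f y| <= `|x - y|.

Definition dual_functional (z : X -> R) : Prop :=
  (forall (a : R) (u v : X), z (a *: u + v) = a * z u + z v) /\ continuous z.

End Defs.

Definition real_analytic {R : realType} (h : R -> R) : Prop :=
  forall t0 : R, exists r : R, 0 < r /\ exists a : nat -> R,
    forall t : R, `|t - t0| < r ->
      (fun N : nat => \sum_(0 <= n < N) a n * (t - t0) ^+ n) @ \oo --> h t.

Definition weakly_real_analytic {R : realType} {X : normedModType R}
    (f : X -> X) : Prop :=
  forall (x y : X) (z : X -> R), dual_functional z ->
    real_analytic (fun t : R => z (f (x + t *: y))).

From HB Require Import structures.
From mathcomp Require Import all_boot all_order all_algebra.
From mathcomp Require Import all_classical all_reals all_analysis.
From mathcomp Require Import ring lra.
Import Order.TTheory GRing.Theory Num.Theory.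
Import numFieldNormedType.Exports.
Local Open Scope classical_set_scope.
Local Open Scope ring_scope.

(* Let a <> b be fixed points of f, u := b - a, and let
   B v := inf_s (`|v + s u| - s `|u|) be the Busemann function of the ray -R+ u;
   B is sublinear, 1-Lipschitz and - `|v| <= B v <= `|v|.  For any w, a
   Hahn-Banach functional phi <= B with phi (a - f w) = B (a - f w) satisfies
   phi <= `|.| and phi u = `|u|.  Nonexpansiveness makes phi o f affine on the
   segment [a, b], and real analyticity propagates this to the whole line
   a + R u; comparing f (a + s u) with f w then yields B (a - f w) <= B (a - w).
   Hence f maps the closed bounded convex set {w | `|a - w| <= T, B (a - w) <= - T}
   into itself, and a fixed point in it lies at distance at least T from a. *)

Set Implicit Arguments. Unset Strict Implicit. Unset Printing Implicit Defensive.

Section LinearFunctional.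
Context {R : realType} {V : lmodType R}.

Definition linear_functional (phi : V -> R) :=
  forall (c : R) x y, phi (c *: x + y) = c * phi x + phi y.

Variable phi : V -> R.
Hypothesis phi_lin : linear_functional phi.

Lemma linear_functional0 : phi 0 = 0.
Proof. by have := phi_lin 1 0 0; rewrite scale1r addr0 mul1r; lra. Qed.

Lemma linear_functionalZ c x : phi (c *: x) = c * phi x.
Proof. by rewrite -[c *: x]addr0 phi_lin linear_functional0 addr0. Qed.

Lemma linear_functionalB x y : phi (x - y) = phi x - phi y.
Proof.
have -> : x - y = 1 *: x + (-1) *: y by rewrite scale1r scaleN1r.
by rewrite phi_lin linear_functionalZ mul1r mulN1r.
Qed.

End LinearFunctional.

Section Sublinear.
Context {R : realType} {V : lmodType R}.

Definition sublinear (p : V -> R) :=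
  (forall x y, p (x + y) <= p x + p y) /\
  (forall (c : R) x, 0 <= c -> p (c *: x) <= c * p x).

Variable p : V -> R.
Hypothesis p_sublinear : sublinear p.

Lemma sublinearD x y : p (x + y) <= p x + p y.
Proof. exact: p_sublinear.1. Qed.

Lemma sublinear0 : p 0 = 0.
Proof.
have := p_sublinear.2 0 0 (lexx _); rewrite scale0r mul0r => le0.
by have := sublinearD 0 0; rewrite addr0; lra.
Qed.

Lemma sublinearZ (c : R) x : 0 < c -> p (c *: x) = c * p x.
Proof.
move=> c_gt0; apply/eqP; rewrite eq_le p_sublinear.2 /=; last exact: ltW.
have c_inv_ge0 : 0 <= c^-1 by rewrite invr_ge0 ltW.
have := p_sublinear.2 _ (c *: x) c_inv_ge0.
by rewrite scalerA mulVf ?gt_eqF // scale1r (ler_pdivlMl _ _ c_gt0).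
Qed.

Lemma sublinearN x : - p (- x) <= p x.
Proof. by have := sublinearD x (- x); rewrite subrr sublinear0; lra. Qed.

End Sublinear.

Section HahnBanach.
Context {R : realType} {V : lmodType R}.
Variables (p : V -> R) (v0 : V).
Hypothesis p_sublinear : sublinear p.

Definition dominated_graph (G : set (V * R)) :=
  [/\ forall x r s, G (x, r) -> G (x, s) -> r = s,
      forall c x r y s, G (x, r) -> G (y, s) -> G (c *: x + y, c * r + s)
    & forall x r, G (x, r) -> r <= p x].

(* The seed is only demanded of nonempty graphs, so that the union of the
   empty chain is still admissible in Zorn's lemma. *)
Definition seeded_graph (G : set (V * R)) :=
  dominated_graph G /\ (G !=set0 -> G (v0, p v0)).

Lemma dominated_graph00 G : dominated_graph G -> G !=set0 -> G (0, 0).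
Proof.
move=> [_ Glin _] [[x r] Gxr].
by have := Glin (-1) _ _ _ _ Gxr Gxr; rewrite scaleN1r mulN1r !addNr.
Qed.

Lemma dominated_graphZ G c y s :
  dominated_graph G -> G (0, 0) -> G (y, s) -> G (c *: y, c * s).
Proof.
by move=> [_ Glin _] G00 Gys; have := Glin c _ _ _ _ Gys G00; rewrite !addr0.
Qed.

Lemma seeded_graph_bigcup F :
  F `<=` seeded_graph -> total_on F subset -> seeded_graph (\bigcup_(G in F) G).
Proof.
move=> Fseeded Ftotal.
have common G1 G2 z1 z2 : F G1 -> F G2 -> G1 z1 -> G2 z2 ->
    exists2 G, F G & G z1 /\ G z2.
  move=> FG1 FG2 G1z1 G2z2; have [G12|G21] := Ftotal _ _ FG1 FG2.
    by exists G2 => //; split => //; apply: G12.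
  by exists G1 => //; split => //; apply: G21.
split; first split.
- move=> x r s [G1 FG1 G1r] [G2 FG2 G2s].
  have [G FG [Gr Gs]] := common _ _ _ _ FG1 FG2 G1r G2s.
  by have [[Gfun _ _] _] := Fseeded _ FG; exact: Gfun Gr Gs.
- move=> c x r y s [G1 FG1 G1r] [G2 FG2 G2s].
  have [G FG [Gr Gs]] := common _ _ _ _ FG1 FG2 G1r G2s.
  by have [[_ Glin _] _] := Fseeded _ FG; exists G => //; exact: Glin.
- by move=> x r [G FG Gr]; have [[_ _ Gdom] _] := Fseeded _ FG; exact: Gdom.
- move=> [z [G FG Gz]]; have [_ Gseed] := Fseeded _ FG.
  by exists G => //; apply: Gseed; exists z.
Qed.

Definition seed_line := range (fun c : R => (c *: v0, c * p v0)).

Lemma seeded_seed_line : seeded_graph seed_line.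
Proof.
split; last by move=> _; exists 1 => //; rewrite scale1r mul1r.
split.
- move=> x r s [c1 _ [<- <-]] [c2 _ [e <-]].
  have [->|v0_neq0] := eqVneq v0 0; first by rewrite sublinear0 // !mulr0.
  move/eqP: e; rewrite -subr_eq0 -scalerBl scaler_eq0 (negPf v0_neq0) orbF.
  by rewrite subr_eq0 => /eqP ->.
- move=> c x r y s [c1 _ [<- <-]] [c2 _ [<- <-]].
  by exists (c * c1 + c2) => //; rewrite scalerDl scalerA mulrDl mulrA.
- move=> x r [c _ [<- <-]].
  have [c_lt0|c_gt0|->] := ltgtP c 0; last by rewrite scale0r mul0r sublinear0.
  + have -> : c *: v0 = - c *: - v0 by rewrite scaleNr scalerN opprK.
    rewrite sublinearZ ?oppr_gt0 // mulNr -mulrN ler_nM2l //.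
    exact: sublinearN.
  + by rewrite sublinearZ.
Qed.

Lemma extension_bounds G x : dominated_graph G -> G !=set0 ->
  exists alpha, (forall y s, G (y, s) -> s - p (y - x) <= alpha) /\
                (forall y s, G (y, s) -> alpha <= p (y + x) - s).
Proof.
move=> [_ Glin Gdom] G_neq0.
have sep y s y' s' : G (y, s) -> G (y', s') -> s - p (y - x) <= p (y' + x) - s'.
  move=> Gys Gys'; have := Gdom _ _ (Glin 1 _ _ _ _ Gys Gys').
  rewrite scale1r mul1r => le_sum.
  have := sublinearD p_sublinear (y - x) (y' + x).
  rewrite addrACA addNr addr0; lra.
pose L := [set e | exists y s, G (y, s) /\ e = s - p (y - x)].
have L_neq0 : L !=set0.
  by case: G_neq0 => -[y s] Gys; exists (s - p (y - x)), y, s.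
have L_ub y' s' : G (y', s') -> ubound L (p (y' + x) - s').
  by move=> Gys' _ [y [s [Gys ->]]]; exact: sep Gys Gys'.
have L_sup : has_sup L.
  by split => //; case: G_neq0 => -[y' s'] /L_ub ub; eexists; exact: ub.
exists (sup L); split.
- by move=> y s Gys; apply: sup_upper_bound => //; exists y, s.
- by move=> y' s' /L_ub; exact: ge_sup.
Qed.

Definition graph_adjoin (G : set (V * R)) (x : V) (alpha : R) :=
  [set z | exists c y s, G (y, s) /\ z = (y + c *: x, s + c * alpha)].

Lemma dominated_graph_adjoin G x alpha :
  dominated_graph G -> G (0, 0) -> (forall r, ~ G (x, r)) ->
  (forall y s, G (y, s) -> s - p (y - x) <= alpha) ->
  (forall y s, G (y, s) -> alpha <= p (y + x) - s) ->
  dominated_graph (graph_adjoin G x alpha).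
Proof.
move=> Gdom G00 x_notin alpha_lb alpha_ub.
have [Gfun Glin Gle] := Gdom.
have GZ c y s : G (y, s) -> G (c *: y, c * s) by exact: dominated_graphZ.
have scale_out c z y s : 0 < c ->
    c * (p (c^-1 *: y + z) - c^-1 * s) = p (y + c *: z) - s.
  move=> c_gt0; rewrite mulrBr mulrA mulfV ?gt_eqF // mul1r -sublinearZ //.
  by rewrite scalerDr scalerA mulfV ?gt_eqF // scale1r.
split.
- move=> _ r1 r2 [c1 [y1 [s1 [Gys1 [-> ->]]]]] [c2 [y2 [s2 [Gys2 [e ->]]]]].
  have [c12|c12] := eqVneq c1 c2.
    rewrite -{}c12 in e *; have y12 : y1 = y2 by apply: (addIr (c1 *: x)).
    by rewrite y12 in Gys1; rewrite (Gfun _ _ _ Gys1 Gys2).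
  have e' : x = (c1 - c2)^-1 *: (- y1 + y2).
    apply: (scalerI (_ : c1 - c2 != 0)); first by rewrite subr_eq0.
    rewrite scalerA mulfV ?subr_eq0 // scale1r scalerBl.
    by rewrite -[c1 *: x](addKr y1) e addrA addrK.
  case: (x_notin ((c1 - c2)^-1 * (- s1 + s2))); rewrite {1}e'.
  by apply: GZ; have := Glin (-1) _ _ _ _ Gys1 Gys2; rewrite scaleN1r mulN1r.
- move=> k _ _ _ _ [c1 [y1 [s1 [Gys1 [-> ->]]]]] [c2 [y2 [s2 [Gys2 [-> ->]]]]].
  exists (k * c1 + c2), (k *: y1 + y2), (k * s1 + s2); split; first exact: Glin.
  congr (_, _).
    by rewrite scalerDr scalerA addrACA scalerDl.
  by rewrite mulrDr mulrA addrACA mulrDl.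
- move=> _ _ [c [y [s [Gys [-> ->]]]]].
  have [c_lt0|c_gt0|->] := ltgtP c 0; last by rewrite scale0r mul0r !addr0 Gle.
  + have Nc_gt0 : 0 < - c by rewrite oppr_gt0.
    have := alpha_lb _ _ (GZ (- c)^-1 _ _ Gys).
    move/(ler_wpM2l (ltW Nc_gt0)); rewrite -opprB mulrN scale_out //.
    by rewrite scalerN scaleNr opprK; lra.
  + have := alpha_ub _ _ (GZ c^-1 _ _ Gys).
    by move/(ler_wpM2l (ltW c_gt0)); rewrite scale_out //; lra.
Qed.

Theorem hahn_banach : exists phi : V -> R,
  [/\ linear_functional phi, forall x, phi x <= p x & phi v0 = p v0].
Proof.
have [A [[Adom Aseed] Amax]] := Zorn_bigcup seeded_graph_bigcup.
have A_neq0 : A !=set0.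
  apply/set0P/negP => /eqP A0; apply: (Amax seed_line); last exact: seeded_seed_line.
  rewrite A0; split; first exact: sub0set.
  by move/(_ (v0, p v0)); apply; exists 1 => //; rewrite scale1r mul1r.
have A00 := dominated_graph00 Adom A_neq0.
have Atotal x : exists r, A (x, r).
  apply/not_existsP => x_notin.
  have [alpha [alpha_lb alpha_ub]] := extension_bounds x Adom A_neq0.
  apply: (Amax (graph_adjoin A x alpha)); last first.
    split; first exact: dominated_graph_adjoin.
    move=> _; exists 0, v0, (p v0); split; first exact: Aseed.
    by rewrite scale0r mul0r !addr0.
  split=> [[y s] Ays|]; first by exists 0, y, s; rewrite scale0r mul0r !addr0.
  move/(_ (x, alpha)) => Ax; apply: (x_notin alpha); apply: Ax.
  by exists 1, 0, 0; rewrite scale1r mul1r !add0r.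
have [phi Aphi] := choice Atotal.
have [Afun Alin Ale] := Adom.
exists phi; split=> [c x y|x|].
- exact: Afun (Aphi _) (Alin _ _ _ _ _ (Aphi x) (Aphi y)).
- exact: Ale.
- exact: Afun (Aphi v0) (Aseed A_neq0).
Qed.

End HahnBanach.

Section PowerSeries.
Context {R : realType}.
Implicit Types (b : nat -> R) (x rho K q : R).

Lemma pseries_term_bounded b rho : 0 <= rho -> cvgn (pseries b rho) ->
  exists K, forall n, `|b n| * rho ^+ n <= K.
Proof.
move=> rho_ge0 /cvg_series_bounded [M [_ HM]].
exists (M + 1) => n; have := HM (M + 1) _ n I; rewrite ltrDl ltr01 => /(_ isT).
by rewrite /= normrM [`|rho ^+ n|]ger0_norm // exprn_ge0.
Qed.

Lemma pseries_sub_lead_le b rho K q x n N :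
  (forall k, (k < n)%N -> b k = 0) -> (forall k, `|b k| * rho ^+ k <= K) ->
  0 <= rho -> 0 < q <= 1/2 -> `|x| <= q * rho -> (n < N)%N ->
  `|pseries b x N - b n * x ^+ n| <= 2 * K * q ^+ n.+1.
Proof.
move=> b_lt_n b_bound rho_ge0 /andP[q_gt0 q_le] x_le nN.
have K_ge0 : 0 <= K by apply: le_trans (b_bound 0%N); rewrite mulr_ge0.
rewrite /pseries /series /= (big_cat_nat (leq0n n) (ltnW nN)) /=.
rewrite big_nat_cond big1 ?add0r; last first.
  by move=> k /andP[/andP[_ kn] _]; rewrite b_lt_n // mul0r.
rewrite big_ltn // addrAC subrr add0r.
apply: le_trans (ler_norm_sum _ _ _) _.
apply: (@le_trans _ _ (\sum_(n.+1 <= k < N) K * q ^+ k)).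
  apply: ler_sum => k _; rewrite normrM normrX.
  apply: le_trans (_ : `|b k| * (q * rho) ^+ k <= _).
    by rewrite ler_wpM2l //; apply: lerXn2r; rewrite ?nnegrE // mulr_ge0 // ltW.
  by rewrite exprMn mulrCA mulrC ler_wpM2r // exprn_ge0 // ltW.
rewrite -mulr_sumr -[N](subnKC nN) geometric_partial_tail.
rewrite [2 * K]mulrC -mulrA ler_wpM2l //.
have qn_ge0 : 0 <= q ^+ n.+1 by rewrite exprn_ge0 // ltW.
apply: le_trans (geometric_le_lim _ qn_ge0 q_gt0 _) _.
  by rewrite gtr0_norm //; lra.
rewrite ler_pdivrMr; last by lra.
nra.
Qed.

Lemma pseries_lead_coef_le b rho K q n :
  (forall k, (k < n)%N -> b k = 0) -> (forall k, `|b k| * rho ^+ k <= K) ->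
  0 < rho -> 0 < q <= 1/2 -> pseries b (- (q * rho)) @ \oo --> 0 ->
  `|b n| * rho ^+ n <= 2 * K * q.
Proof.
move=> b_lt_n b_bound rho_gt0 q_range b_cvg0.
have /andP[q_gt0 _] := q_range.
set x := - (q * rho).
have q_rho_ge0 : 0 <= q * rho by rewrite mulr_ge0 // ltW.
have x_le : `|x| <= q * rho by rewrite normrN ger0_norm.
have : `|0 - b n * x ^+ n| <= 2 * K * q ^+ n.+1.
  apply: cvgr_to_le (cvg_norm (cvgB b_cvg0 (cvg_cst (b n * x ^+ n)))) _.
  exists n.+1 => // N /= nN.
  exact: pseries_sub_lead_le b_lt_n b_bound (ltW rho_gt0) q_range x_le nN.
rewrite sub0r normrN normrM normrX normrN [`|q * rho|]ger0_norm //.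
have -> : `|b n| * (q * rho) ^+ n = `|b n| * rho ^+ n * q ^+ n.
  by rewrite exprMn; ring.
have -> : 2 * K * q ^+ n.+1 = 2 * K * q * q ^+ n by rewrite exprS; ring.
by rewrite ler_pM2r // exprn_gt0.
Qed.

Lemma pseries_coef_eq0 b r d (E : R -> R) : 0 < r -> 0 < d ->
  (forall x, `|x| < r -> pseries b x @ \oo --> E x) ->
  (forall x, - d < x < 0 -> E x = 0) ->
  forall n, b n = 0.
Proof.
move=> r_gt0 d_gt0 b_cvg E_left.
pose rho := r / 2.
have rho_gt0 : 0 < rho by rewrite divr_gt0.
have [K b_bound] : exists K, forall k, `|b k| * rho ^+ k <= K.
  apply: pseries_term_bounded; first exact: ltW.
  by apply/cvg_ex; exists (E rho); apply: b_cvg; rewrite gtr0_norm /rho //; lra.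
have K_ge0 : 0 <= K by apply: le_trans (b_bound 0%N); rewrite mulr_ge0.
elim/ltn_ind => n IH.
suff : `|b n| * rho ^+ n <= 0.
  by rewrite pmulr_lle0 ?exprn_gt0 // normr_le0 => /eqP.
apply/ler_addgt0Pr => eps eps_gt0; rewrite add0r.
pose q := Num.min (1/2) (Num.min (d / (2 * rho)) (eps / (2 * K + 1))).
have q_gt0 : 0 < q.
  by rewrite !lt_min !divr_gt0 ?mulr_gt0 //; lra.
have q_le_half : q <= 1/2 by rewrite ge_min lexx.
have q_le_d : q <= d / (2 * rho) by rewrite !ge_min lexx orbT.
have q_le_eps : q <= eps / (2 * K + 1) by rewrite !ge_min lexx !orbT.
have q_range : 0 < q <= 1/2 by rewrite q_gt0.
have q_rho_lt_d : q * rho < d.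
  have : q * rho <= d / (2 * rho) * rho by rewrite ler_pM2r.
  have -> : d / (2 * rho) * rho = d / 2 by field; rewrite gt_eqF.
  lra.
have q_rho_lt_r : q * rho < r.
  have : q * rho <= 1/2 * rho by rewrite ler_pM2r.
  rewrite /rho; lra.
have x_cvg0 : pseries b (- (q * rho)) @ \oo --> 0.
  rewrite -(E_left (- (q * rho))); last by rewrite ltrN2 q_rho_lt_d oppr_lt0 mulr_gt0.
  by apply: b_cvg; rewrite normrN gtr0_norm ?mulr_gt0.
apply: le_trans (pseries_lead_coef_le IH b_bound rho_gt0 q_range x_cvg0) _.
apply: le_trans (_ : 2 * K * (eps / (2 * K + 1)) <= _).
  by rewrite ler_wpM2l // mulr_ge0.
rewrite mulrA ler_pdivrMr; lra.
Qed.

End PowerSeries.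

Section RealAnalytic.
Context {R : realType}.
Implicit Types (f g h : R -> R).

Lemma real_analyticB f g : real_analytic f -> real_analytic g ->
  real_analytic (fun t => f t - g t).
Proof.
move=> f_an g_an t0.
have [r1 [r1_gt0 [a1 a1_cvg]]] := f_an t0.
have [r2 [r2_gt0 [a2 a2_cvg]]] := g_an t0.
exists (Num.min r1 r2); split; first by rewrite lt_min r1_gt0.
exists (fun n => a1 n - a2 n) => t; rewrite lt_min => /andP[t_r1 t_r2].
change (pseries (fun n => a1 n - a2 n) (t - t0) @ \oo --> f t - g t).
have -> : pseries (fun n => a1 n - a2 n) (t - t0) =
          (fun N => pseries a1 (t - t0) N - pseries a2 (t - t0) N).
  by apply/funext => N; rewrite /= -sumrB; apply: eq_bigr => n _; rewrite /= mulrBl.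
exact: cvgB (a1_cvg _ t_r1) (a2_cvg _ t_r2).
Qed.

Lemma real_analytic_affine (alpha beta : R) :
  real_analytic (fun t => alpha + beta * t).
Proof.
move=> t0; exists 1; split => //.
exists (fun n => if n == 0%N then alpha + beta * t0 else if n == 1%N then beta else 0).
move=> t _; apply: cvg_near_cst; exists 2%N => // N /= N_ge2.
rewrite big_ltn ?(leq_trans _ N_ge2) // big_ltn ?(leq_trans _ N_ge2) //= big1_seq.
  by rewrite expr0 expr1 /=; ring.
move=> k /andP[_]; rewrite mem_index_iota => /andP[k_ge2 _].
by rewrite !ifN ?mul0r //; apply: contraTneq k_ge2 => ->.
Qed.

Lemma real_analytic_eq0_right h c d : real_analytic h -> c < d ->
  (forall s, c <= s <= d -> h s = 0) -> forall s, c <= s -> h s = 0.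
Proof.
move=> h_an cd h0 s cs.
have [sd|ds] := leP s d; first by apply: h0; rewrite cs.
pose S := [set T | d <= T <= s /\ forall y, c <= y <= T -> h y = 0].
have Sd : S d by split; [rewrite lexx ltW | exact: h0].
have S_sup : has_sup S by split; [exists d | exists s => T [/andP[]]].
set T0 := sup S.
have dT0 : d <= T0 by exact: sup_upper_bound.
have T0s : T0 <= s by apply: ge_sup; [exists d | move=> T [/andP[]]].
have h0_below y : c <= y < T0 -> h y = 0.
  move=> /andP[cy]; rewrite -subr_gt0 => yT0.
  have [T [_ S_T] yT] := sup_adherent yT0 S_sup.
  by apply: S_T; rewrite cy /=; rewrite opprB addrC subrK in yT; exact: ltW.
have [r [r_gt0 [a a_cvg]]] := h_an T0.
have a0 : forall n, a n = 0.
  apply: (@pseries_coef_eq0 _ a r (T0 - c) (fun x => h (T0 + x))) => //.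
  - by rewrite subr_gt0; exact: lt_le_trans dT0.
  - by move=> x xr; have := a_cvg (T0 + x); rewrite addrC addKr; exact.
  - by move=> x /andP[x_gt x_lt0]; apply: h0_below; lra.
have h0_near t : `|t - T0| < r -> h t = 0.
  move=> tT0; have : pseries a (t - T0) @ \oo --> h t by exact: a_cvg.
  have -> : pseries a (t - T0) = cst 0.
    by apply/funext => N; rewrite /pseries /series /= big1 // => n _; rewrite a0 mul0r.
  by move/cvg_lim => <- //; rewrite lim_cst.
have [sr|rs] := ltP s (T0 + r); first by apply: h0_near; rewrite ger0_norm; lra.
suff : S (T0 + r / 2) by move/(sup_upper_bound S_sup); rewrite -/T0; lra.
split; first by apply/andP; split; lra.
move=> y /andP[cy yr]; have [yT0|T0y] := ltP y T0; first by apply: h0_below; rewrite cy.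
by apply: h0_near; rewrite ger0_norm; lra.
Qed.

End RealAnalytic.

Lemma real_analytic_affine_right {R : realType} (h : R -> R) alpha beta c d :
  real_analytic h -> c < d ->
  (forall s, c <= s <= d -> h s = alpha + beta * s) ->
  forall s, c <= s -> h s = alpha + beta * s.
Proof.
move=> h_an cd h_affine s cs; apply/eqP; rewrite -subr_eq0; apply/eqP.
apply: (real_analytic_eq0_right (real_analyticB h_an (real_analytic_affine _ _)) cd) => //.
by move=> t /h_affine ->; rewrite subrr.
Qed.

Section NormedSpace.
Context {R : realType} {X : normedModType R}.

Lemma lipschitz1_continuous (h : X -> R) :
  (forall v w, h v - h w <= `|v - w|) -> continuous h.
Proof.
move=> h_lip v; apply/cvgrPdist_lt => e e_gt0.
apply/nbhs_ballP; exists e => // w; rewrite -ball_normE /ball_ /= => vw.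
apply: le_lt_trans vw; rewrite ler_norml h_lip andbT.
by have := h_lip w v; rewrite distrC; lra.
Qed.

Lemma dual_functional_le_norm (phi : X -> R) :
  linear_functional phi -> (forall v, phi v <= `|v|) -> dual_functional phi.
Proof.
move=> phi_lin phi_le; split => //.
by apply: lipschitz1_continuous => v w; rewrite -linear_functionalB.
Qed.

Lemma norm_sublinear : sublinear (@Num.norm R X).
Proof.
split; first exact: ler_normD.
by move=> c x c_ge0; rewrite normrZ ger0_norm.
Qed.

Lemma convex_sublevel (p : X -> R) a c :
  sublinear p -> convex_subset [set w | p (a - w) <= c].
Proof.
move=> p_sub w1 w2 /= pw1 pw2 t t_ge0 t_le1.
have t'_ge0 : 0 <= 1 - t by rewrite subr_ge0.
have -> : a - (t *: w1 + (1 - t) *: w2) = t *: (a - w1) + (1 - t) *: (a - w2).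
  by rewrite !scalerBr addrACA -scalerDl (addrC t) subrK scale1r opprD.
apply: le_trans (sublinearD p_sub _ _) _.
have := p_sub.2 _ (a - w1) t_ge0; have := p_sub.2 _ (a - w2) t'_ge0.
have := ler_wpM2l t_ge0 pw1; have := ler_wpM2l t'_ge0 pw2.
lra.
Qed.

Lemma dual_functional_affine_line (f : X -> X) z a u alpha beta :
  weakly_real_analytic f -> dual_functional z ->
  (forall s, 0 <= s <= 1 -> z (f (a + s *: u)) = alpha + beta * s) ->
  forall s, z (f (a + s *: u)) = alpha + beta * s.
Proof.
move=> f_an z_dual z_affine s.
have [s_ge0|s_lt0] := leP 0 s.
  exact: (real_analytic_affine_right (f_an a u z z_dual) ltr01).
(* Continuation only runs to the right, so run along the line backwards from a + u. *)
have back t : a + u + t *: - u = a + (1 - t) *: u.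
  by rewrite scalerBl scale1r scalerN addrA.
have s'_ge0 : 0 <= 1 - s by lra.
have := real_analytic_affine_right (alpha := alpha + beta) (beta := - beta)
  (f_an (a + u) (- u) z z_dual) ltr01 _ s'_ge0.
rewrite back subKr => -> //; first by ring.
by move=> t t01; rewrite back z_affine; [ring | lra].
Qed.

End NormedSpace.

Section Busemann.
Context {R : realType} {X : normedModType R}.
Variable u : X.

(* The Busemann function of the ray [s |-> - s *: u]: the map
   [s |-> `|v + s *: u| - s * `|u|] is nonincreasing, so its infimum is its
   limit at +oo. *)
Definition busemann (v : X) : R :=
  inf (range (fun s : R => `|v + s *: u| - s * `|u|)).

Lemma busemann_lbound v :
  lbound (range (fun s : R => `|v + s *: u| - s * `|u|)) (- `|v|).
Proof.
move=> _ [s _ <-]; have := ler_normB (v + s *: u) v.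
rewrite addrC addKr normrZ; have := real_ler_norm (num_real s).
have := normr_ge0 u; nra.
Qed.

Lemma busemann_le v s : busemann v <= `|v + s *: u| - s * `|u|.
Proof. by apply: ge_inf; [exists (- `|v|); exact: busemann_lbound | exists s]. Qed.

Lemma le_busemann v c :
  (forall s, c <= `|v + s *: u| - s * `|u|) -> c <= busemann v.
Proof.
move=> c_le; apply: lb_le_inf; last by move=> _ [s _ <-].
by exists (`|v + 0 *: u| - 0 * `|u|), 0.
Qed.

Lemma busemann_ge v : - `|v| <= busemann v.
Proof. by apply: le_busemann => s; apply: busemann_lbound; exists s. Qed.

Lemma busemann_le_norm v : busemann v <= `|v|.
Proof. by have := busemann_le v 0; rewrite scale0r addr0 mul0r subr0. Qed.

Lemma busemann_opp : busemann (- u) <= - `|u|.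
Proof. by have := busemann_le (- u) 1; rewrite scale1r addNr normr0 mul1r sub0r. Qed.

Lemma busemann_sublinear : sublinear busemann.
Proof.
split=> [v w|c v].
  rewrite -lerBlDr; apply: le_busemann => s; rewrite lerBlDr -lerBlDl.
  apply: le_busemann => s'; rewrite lerBlDl.
  apply: le_trans (busemann_le _ (s + s')) _.
  rewrite scalerDl addrACA.
  have := ler_normD (v + s *: u) (w + s' *: u); lra.
rewrite le_eqVlt => /orP[/eqP <-|c_gt0].
  by rewrite scale0r mul0r; have := busemann_le_norm 0; rewrite normr0.
rewrite mulrC -ler_pdivrMr //; apply: le_busemann => s.
rewrite ler_pdivrMr // mulrC.
apply: le_trans (busemann_le _ (c * s)) _.
by rewrite -scalerA -scalerDr normrZ gtr0_norm // mulrBr mulrA.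
Qed.

Lemma busemann_lipschitz v w : busemann v - busemann w <= `|v - w|.
Proof.
have := sublinearD busemann_sublinear w (v - w); rewrite addrC subrK.
have := busemann_le_norm (v - w); lra.
Qed.

End Busemann.

Section FarFixedPoints.
Context {R : realType} {X : normedModType R}.
Variables (f : X -> X) (a b : X).
Hypotheses (f_ne : nonexpansive f) (f_an : weakly_real_analytic f).
Hypotheses (fa : f a = a) (fb : f b = b).

Lemma norming_functional_fixed_line phi :
  linear_functional phi -> (forall v, phi v <= `|v|) -> phi (b - a) = `|b - a| ->
  forall s, phi (f (a + s *: (b - a))) = phi a + `|b - a| * s.
Proof.
move=> phi_lin phi_le phi_ba.
apply: dual_functional_affine_line (dual_functional_le_norm phi_lin phi_le) _ => //.
move=> s /andP[s_ge0 s_le1]; set w := a + s *: (b - a).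
have wa : `|f w - a| <= s * `|b - a|.
  rewrite -{1}fa; apply: le_trans (f_ne _ _) _.
  by rewrite addrAC subrr add0r normrZ ger0_norm.
have bw : `|b - f w| <= (1 - s) * `|b - a|.
  rewrite -{1}fb; apply: le_trans (f_ne _ _) _.
  rewrite /w opprD addrA -{1}[b - a]scale1r -scalerBl normrZ ger0_norm //; lra.
have := phi_le (f w - a); have := phi_le (b - f w).
rewrite !(linear_functionalB phi_lin) in phi_ba *; nra.
Qed.

Lemma busemann_image_le w :
  busemann (b - a) (a - f w) <= busemann (b - a) (a - w).
Proof.
have [phi [phi_lin phi_le phi_eq]] :=
  hahn_banach (a - f w) (busemann_sublinear (b - a)).
have phi_le_norm v : phi v <= `|v| := le_trans (phi_le v) (busemann_le_norm _ v).
have phi_ba : phi (b - a) = `|b - a|.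
  apply/eqP; rewrite eq_le phi_le_norm /=.
  have := le_trans (phi_le _) (busemann_opp (b - a)).
  by rewrite -sub0r (linear_functionalB phi_lin) (linear_functional0 phi_lin); lra.
have line := norming_functional_fixed_line phi_lin phi_le_norm phi_ba.
rewrite -phi_eq; apply: le_busemann => s.
have := phi_le_norm (f (a + s *: (b - a)) - f w).
have := f_ne (a + s *: (b - a)) w.
rewrite !(linear_functionalB phi_lin) line addrAC; lra.
Qed.

Definition horoball_cap (T : R) : set X :=
  [set w | `|a - w| <= T /\ busemann (b - a) (a - w) <= - T].

Lemma horoball_cap_far T w : horoball_cap T w -> T <= `|a - w|.
Proof. by move=> [_ busemann_le_T]; have := busemann_ge (b - a) (a - w); lra. Qed.

Lemma horoball_cap_neq0 T : a != b -> 0 <= T -> horoball_cap T !=set0.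
Proof.
rewrite eq_sym -subr_eq0 -normr_gt0 => ba_gt0 T_ge0.
pose t := T / `|b - a|.
have tT : t * `|b - a| = T by rewrite /t divfK // gt_eqF.
exists (a + t *: (b - a)); rewrite /horoball_cap /= opprD addrA subrr add0r normrN.
split; first by rewrite normrZ ger0_norm ?divr_ge0 // ?tT // ltW.
by have := busemann_le (b - a) (- (t *: (b - a))) t; rewrite addNr normr0 tT sub0r.
Qed.

Lemma horoball_cap_closed T : closed (horoball_cap T).
Proof.
have dist_cont : continuous (fun w => `|a - w|).
  apply: lipschitz1_continuous => v w.
  by have := ler_normD (a - w) (w - v); rewrite addrA subrK (distrC w v); lra.
have busemann_cont : continuous (fun w => busemann (b - a) (a - w)).
  apply: lipschitz1_continuous => v w.
  have := busemann_lipschitz (b - a) (a - v) (a - w).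
  have -> : a - v - (a - w) = w - v by rewrite opprB addrC addrA subrK.
  by rewrite distrC.
have -> : horoball_cap T = (fun w => `|a - w|) @^-1` [set r | r <= T] `&`
    (fun w => busemann (b - a) (a - w)) @^-1` [set r | r <= - T] by [].
apply: closedI.
- by apply: (continuous_closedP _).1 dist_cont _ _; exact: closed_le.
- by apply: (continuous_closedP _).1 busemann_cont _ _; exact: closed_le.
Qed.

Lemma horoball_cap_bounded T : bounded_subset (horoball_cap T).
Proof.
exists (`|a| + T) => w [aw_le _].
by have := ler_normB a (a - w); rewrite opprB addrC subrK; lra.
Qed.

Lemma horoball_cap_convex T : convex_subset (horoball_cap T).
Proof.
move=> w1 w2 [w1_n w1_b] [w2_n w2_b] t t_ge0 t_le1; split.
- exact: (convex_sublevel (a := a) norm_sublinear) _ _ w1_n w2_n _ t_ge0 t_le1.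
- exact: (convex_sublevel (a := a) (busemann_sublinear _)) _ _ w1_b w2_b _ t_ge0 t_le1.
Qed.

Lemma horoball_cap_invariant T : f @` horoball_cap T `<=` horoball_cap T.
Proof.
move=> _ [w [aw_le w_busemann] <-]; split.
- by rewrite -{1}fa; exact: le_trans (f_ne a w) aw_le.
- exact: le_trans (busemann_image_le w) w_busemann.
Qed.

Lemma far_fixed_point T : @fixed_point_property R X -> a != b -> 0 <= T ->
  exists2 p, f p = p & T <= `|a - p|.
Proof.
move=> fpp ab T_ge0.
have [p Cp fp] := fpp _ f (horoball_cap_neq0 ab T_ge0) (@horoball_cap_closed T)
  (@horoball_cap_bounded T) (@horoball_cap_convex T) (@horoball_cap_invariant T)
  (fun x y _ _ => f_ne x y).
by exists p => //; exact: horoball_cap_far.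
Qed.

End FarFixedPoints.

Theorem theorem5p3 (R : realType) (X : completeNormedModType R) (f : X -> X) :
  @fixed_point_property R X ->
  nonexpansive f ->
  weakly_real_analytic f ->
  (exists x y : X, f x = x /\ f y = y /\ x <> y) ->
  ~ (exists M : R, forall x : X, f x = x -> `|x| <= M).
Proof.
move=> fpp f_ne f_an [a [b [fa [fb /eqP ab]]]] [M fix_le].
have T_ge0 : 0 <= 2 * M + 1.
  by have := le_trans (normr_ge0 a) (fix_le a fa); lra.
have [p fp far] := far_fixed_point f_ne f_an fa fb fpp ab T_ge0.
have := ler_normB a p; have := fix_le a fa; have := fix_le p fp; lra.
Qed.
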